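(* Let $W\subset T(\mathbf E)^\vee$ be the $\mathbb Q$-span of $\mathbf e_{10}^\vee\mathbf e_4^\vee$, $\mathbf e_4^\vee\mathbf e_{10}^\vee$, $\mathbf e_8^\vee\mathbf e_6^\vee$, $\mathbf e_6^\vee\mathbf e_8^\vee$. Then \[ \iota(U(\mathfrak u)^\vee)\cap W\subseteq\mathrm{span}_{\mathbb Q}\{\mathbf e_{10}^\vee\,ш\,\mathbf e_4^\vee,\ \mathbf e_8^\vee\,ш\,\mathbf e_6^\vee,\ 3\mathbf e_{10}^\vee\mathbf e_4^\vee+\mathbf e_8^\vee\mathbf e_6^\vee\}, \] where $ш$ denotes the shuffle product (so $\mathbf e_a^\vee ш\mathbf e_b^\vee=\mathbf e_a^\vee\mathbf e_b^\vee+\mathbf e_b^\vee\mathbf e_a^\vee$).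
   Context: $\mathbf E=\{\mathbf e_0,\mathbf e_2,\mathbf e_4,\ldots\}$; $T(\mathbf E)$ is the free associative (tensor) $\mathbb Q$-algebra on $\mathbf E$, graded with each $\mathbf e_{2k}$ of degree one, and $T(\mathbf E)^\vee$ is its graded dual, with basis the dual words $\mathbf e^\vee_{2k_1}\cdots\mathbf e^\vee_{2k_n}$ and product the shuffle product. Let $\mathcal L$ be the free Lie algebra on $\{x,y\}$, and for $k\ge0$ let $\varepsilon_{2k}$ be the derivation of $\mathcal L$ with $\varepsilon_{2k}(x)=\mathrm{ad}^{2k}(x)(y)$ and $\varepsilon_{2k}(y)=\sum_{0\le j<k}(-1)^j[\mathrm{ad}^j(x)(y),\mathrm{ad}^{2k-1-j}(x)(y)]$. Let $\mathfrak u$ be the Lie algebra of derivations generated by the $\varepsilon_{2k}$, $U(\mathfrak u)$ its universal enveloping algebra (graded, $\varepsilon_{2k}$ of degree one), and $\iota:U(\mathfrak u)^\vee\hookrightarrow T(\mathbf E)^\vee$ the graded dual of the surjection $T(\mathbf E)\to U(\mathfrak u)$, $\mathbf e_{2k}\mapsto\varepsilon_{2k}$. (Known input: in $\mathfrak u$ one has $[\varepsilon_{10},\varepsilon_4]-3[\varepsilon_8,\varepsilon_6]=0$.) *)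

From HB Require Import structures.
From mathcomp Require Import all_boot all_order all_algebra.
Set Implicit Arguments. Unset Strict Implicit. Unset Printing Implicit Defensive.
Import Order.TTheory GRing.Theory Num.Theory.
Local Open Scope ring_scope.

(* ---------- Noncommutative polynomials (free associative Q-algebras) ------
   An element of the free associative Q-algebra on an alphabet A is given by a
   finite formal linear combination of words (a list of (coefficient, word));
   two such lists denote the same element iff all coefficients agree. *)
Definition ncpoly (A : Type) := seq (rat * seq A).

Definition nccoef (A : eqType) (p : ncpoly A) (w : seq A) : rat :=
  \sum_(m <- p | m.2 == w) m.1.
Definition nceq (A : eqType) (p q : ncpoly A) : Prop :=
  forall w, nccoef p w = nccoef q w.

Definition ncadd A (p q : ncpoly A) : ncpoly A := p ++ q.
Definition ncscale A (c : rat) (p : ncpoly A) : ncpoly A :=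
  [seq (c * m.1, m.2) | m <- p].
Definition ncmul A (p q : ncpoly A) : ncpoly A :=
  [seq (m.1 * n.1, m.2 ++ n.2) | m <- p, n <- q].
Definition ncsub A (p q : ncpoly A) : ncpoly A := ncadd p (ncscale (-1) q).
Definition ncword A (w : seq A) : ncpoly A := [:: (1, w)].
Definition nclet A (a : A) : ncpoly A := ncword [:: a].
Definition ncbr A (p q : ncpoly A) : ncpoly A := ncsub (ncmul p q) (ncmul q p).
Definition ncsum A (s : seq (ncpoly A)) : ncpoly A := flatten s.

Definition lx : bool := true.
Definition ly : bool := false.
Definition X : ncpoly bool := nclet lx.
Definition Y : ncpoly bool := nclet ly.

Definition adx (p : ncpoly bool) : ncpoly bool := ncbr X p.
Definition adx_pow (n : nat) (p : ncpoly bool) : ncpoly bool := iter n adx p.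

(* The letter k stands for the generator e_{2k} of E. *)
Definition E2 (n : nat) : nat := n./2.

Definition eps_x (k : nat) : ncpoly bool := adx_pow (2 * k) Y.
Definition eps_y (k : nat) : ncpoly bool :=
  ncsum [seq ncscale ((-1) ^+ j) (ncbr (adx_pow j Y) (adx_pow (2 * k - 1 - j) Y))
        | j <- iota 0 k].
Definition eps_img (k : nat) (b : bool) : ncpoly bool :=
  if b then eps_x k else eps_y k.

(* The unique derivation of Q<x,y> with given values on the letters x, y
   (it restricts to the derivation of L with these values on x, y). *)
Fixpoint der_word (img : bool -> ncpoly bool) (w : seq bool) : ncpoly bool :=
  match w with
  | [::] => [::]
  | a :: w' => ncadd (ncmul (img a) (ncword w')) (ncmul (nclet a) (der_word img w'))
  end.
Definition der (img : bool -> ncpoly bool) (p : ncpoly bool) : ncpoly bool :=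
  ncsum [seq ncscale m.1 (der_word img m.2) | m <- p].

Definition tens := ncpoly nat.

Definition act_word (u : seq nat) (p : ncpoly bool) : ncpoly bool :=
  foldr (fun k q => der (eps_img k) q) p u.
Definition act (t : tens) (p : ncpoly bool) : ncpoly bool :=
  ncsum [seq ncscale m.1 (act_word m.2 p) | m <- t].

Inductive lieterm : Type :=
| LGen of nat
| LBr of lieterm & lieterm
| LAdd of lieterm & lieterm
| LScale of rat & lieterm.

Fixpoint lie_tens (t : lieterm) : tens :=
  match t with
  | LGen k => nclet k
  | LBr s u => ncbr (lie_tens s) (lie_tens u)
  | LAdd s u => ncadd (lie_tens s) (lie_tens u)
  | LScale c s => ncscale c (lie_tens s)
  end.

(* Lie element P of Lie(E) mapping to 0 in u (the derivation it induces on
   L vanishes, i.e. vanishes on the generators x and y). *)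
Definition lie_ker (t : lieterm) : Prop :=
  nceq (act (lie_tens t) X) [::] /\ nceq (act (lie_tens t) Y) [::].

(* Kernel of T(E) -> U(u): the two-sided ideal generated by ker(Lie(E) -> u)
   (since U(Lie(E)) = T(E) and U(g/I) = U(g)/(I)). *)
Inductive in_ker : tens -> Prop :=
| ker_gen (a b : tens) (t : lieterm) :
    lie_ker t -> in_ker (ncmul (ncmul a (lie_tens t)) b)
| ker_zero : in_ker [::]
| ker_add p q : in_ker p -> in_ker q -> in_ker (ncadd p q)
| ker_scale c p : in_ker p -> in_ker (ncscale c p)
| ker_ext p q : nceq p q -> in_ker p -> in_ker q.

Definition dual := seq nat -> rat.
Definition pairing (f : dual) (t : tens) : rat := \sum_(m <- t) m.1 * f m.2.

(* iota(U(u)^vee) = annihilator of the kernel of T(E) -> U(u) *)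
Definition in_iota_image (f : dual) : Prop :=
  forall t, in_ker t -> pairing f t = 0.

Definition dw (u : seq nat) : dual := fun w => (w == u)%:R.

Fixpoint shuffle (u v : seq nat) : seq (seq nat) :=
  let fix sh_aux (v : seq nat) : seq (seq nat) :=
    match u, v with
    | [::], _ => [:: v]
    | _, [::] => [:: u]
    | a :: u', b :: v' =>
        [seq a :: s | s <- shuffle u' v] ++ [seq b :: s | s <- sh_aux v']
    end in sh_aux v.
Definition shuffle_dual (u v : seq nat) : dual :=
  fun w => (count (pred1 w) (shuffle u v))%:R.

Definition in_W (f : dual) : Prop :=
  exists a b c d : rat, forall w,
    f w = a * dw [:: E2 10; E2 4] w + b * dw [:: E2 4; E2 10] w
        + c * dw [:: E2 8; E2 6] w + d * dw [:: E2 6; E2 8] w.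

From HB Require Import structures.
From mathcomp Require Import all_boot all_order all_algebra.
From mathcomp Require Import lra.
Import Order.TTheory GRing.Theory Num.Theory.
Set Implicit Arguments. Unset Strict Implicit.
Local Open Scope ring_scope.

(* The Lie element [e10, e4] - 3 [e8, e6] of Lie(E) acts as the zero derivation
   on L; this is verified by computing its action on x and y in exact rational
   arithmetic, after collecting like terms at every step.  Hence every f in the
   image of iota annihilates it.  For f with coordinates a, b, c, d on
   e10e4, e4e10, e8e6, e6e8 this reads a - b - 3c + 3d = 0, and then
   f = b (e10 ш e4) + d (e8 ш e6) + (c - d) (3 e10e4 + e8e6). *)

Section NcCoefficients.
Variable A : eqType.
Implicit Types (p q : ncpoly A) (g : seq A -> rat).

Definition nclin g p : rat := \sum_(m <- p) m.1 * g m.2.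

Lemma nccoefE p w : nccoef p w = nclin (fun v => (v == w)%:R) p.
Proof.
rewrite /nccoef /nclin big_mkcond /=; apply: eq_bigr => m _.
by case: eqP => _; rewrite ?mulr1 ?mulr0.
Qed.

Lemma nccoef_cons m p w : nccoef (m :: p) w = m.1 * (m.2 == w)%:R + nccoef p w.
Proof. by rewrite !nccoefE /nclin big_cons. Qed.

Lemma nccoef_nil w : nccoef ([::] : ncpoly A) w = 0.
Proof. by rewrite /nccoef big_nil. Qed.

Lemma nccoef_add p q w : nccoef (ncadd p q) w = nccoef p w + nccoef q w.
Proof. by rewrite /nccoef /ncadd big_cat. Qed.

Lemma nccoef_scale c p w : nccoef (ncscale c p) w = c * nccoef p w.
Proof.
rewrite !nccoefE /nclin /ncscale big_map big_distrr.
by apply: eq_bigr => m _; rewrite /= mulrA.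
Qed.

Lemma nccoef_sum (s : seq (ncpoly A)) w :
  nccoef (ncsum s) w = \sum_(p <- s) nccoef p w.
Proof. by rewrite /nccoef /ncsum big_flatten. Qed.

Lemma nccoef_mul p q w :
  nccoef (ncmul p q) w = nclin (fun u => nclin (fun v => (u ++ v == w)%:R) q) p.
Proof.
rewrite nccoefE /nclin /ncmul big_allpairs_dep; apply: eq_bigr => m _.
by rewrite big_distrr; apply: eq_bigr => n _; rewrite /= mulrA.
Qed.

Lemma nclin_coef g s p : uniq s -> {subset map snd p <= s} ->
  nclin g p = \sum_(v <- s) nccoef p v * g v.
Proof.
move=> s_uniq; elim: p => [|m p IHp] p_sub.
  by rewrite /nclin big_nil big1 // => v _; rewrite nccoef_nil mul0r.
have m_s : m.2 \in s by apply: p_sub; rewrite inE eqxx.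
rewrite /nclin big_cons -/(nclin g p) IHp; last first.
  by move=> v v_p; apply: p_sub; rewrite inE v_p orbT.
under [RHS]eq_bigr do rewrite nccoef_cons mulrDl.
rewrite big_split /=; congr (_ + _).
rewrite (bigD1_seq m.2) //= eqxx mulr1 big1 ?addr0 // => v.
by rewrite eq_sym => /negbTE->; rewrite mulr0 mul0r.
Qed.

Lemma nclin_nceq g p q : nceq p q -> nclin g p = nclin g q.
Proof.
move=> epq; set s := undup (map snd (p ++ q)).
have s_uniq : uniq s := undup_uniq _.
rewrite (nclin_coef g s_uniq) ?(nclin_coef g s_uniq (p := q)).
- by apply: eq_bigr => v _; rewrite epq.
- by move=> v v_q; rewrite mem_undup map_cat mem_cat v_q orbT.
- by move=> v v_p; rewrite mem_undup map_cat mem_cat v_p.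
Qed.

Lemma ncadd_nceq p p' q q' :
  nceq p p' -> nceq q q' -> nceq (ncadd p q) (ncadd p' q').
Proof. by move=> ep eq w; rewrite !nccoef_add ep eq. Qed.

Lemma ncmul_nceq p p' q q' :
  nceq p p' -> nceq q q' -> nceq (ncmul p q) (ncmul p' q').
Proof.
move=> ep eq w; rewrite !nccoef_mul (nclin_nceq _ ep).
by apply: eq_bigr => m _; rewrite (nclin_nceq _ eq).
Qed.

Fixpoint ncinsert (m : rat * seq A) p : ncpoly A :=
  if p is n :: p' then
    if n.2 == m.2 then (n.1 + m.1, n.2) :: p' else n :: ncinsert m p'
  else [:: m].

Definition ncnormalize p : ncpoly A := foldr ncinsert [::] p.

Lemma nccoef_insert m p w :
  nccoef (ncinsert m p) w = m.1 * (m.2 == w)%:R + nccoef p w.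
Proof.
elim: p => [|n p IHp] /=; first by rewrite nccoef_cons nccoef_nil addr0.
case: eqP => [<-|_]; rewrite !nccoef_cons ?IHp; last by rewrite addrCA.
by rewrite mulrDl addrCA addrA.
Qed.

Lemma nccoef_normalize p w : nccoef (ncnormalize p) w = nccoef p w.
Proof. by elim: p => //= m p IHp; rewrite nccoef_insert IHp nccoef_cons. Qed.

Lemma nceq0_normalize p : all (fun m => m.1 == 0) (ncnormalize p) -> nceq p [::].
Proof.
move=> p0 w; rewrite -nccoef_normalize nccoefE nccoef_nil /nclin big1_seq //.
by move=> m /= /(allP p0)/eqP->; rewrite mul0r.
Qed.

End NcCoefficients.

Lemma nccoef_der img p w :
  nccoef (der img p) w = nclin (fun v => nccoef (der_word img v) w) p.
Proof.
rewrite /der nccoef_sum /nclin big_map; apply: eq_bigr => m _.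
by rewrite nccoef_scale.
Qed.

Lemma der_nceq img img' p p' :
  (forall b, nceq (img b) (img' b)) -> nceq p p' -> nceq (der img p) (der img' p').
Proof.
move=> eimg ep w; rewrite !nccoef_der (nclin_nceq _ ep).
have eword v : nceq (der_word img v) (der_word img' v).
  by elim: v => //= a v IHv; apply: ncadd_nceq; apply: ncmul_nceq.
by apply: eq_bigr => m _; rewrite eword.
Qed.

(* Under [vm_compute] the [let]s normalize eps_x k and eps_y k once per
   application of [der], not once per letter of every word. *)
Definition eps_img_norm (k : nat) : bool -> ncpoly bool :=
  let ex := ncnormalize (eps_x k) in let ey := ncnormalize (eps_y k) in
  fun b => if b then ex else ey.

Definition act_word_norm (u : seq nat) (p : ncpoly bool) : ncpoly bool :=
  foldr (fun k q => ncnormalize (der (eps_img_norm k) q)) p u.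

Definition act_norm (t : tens) (p : ncpoly bool) : ncpoly bool :=
  ncsum [seq ncscale m.1 (act_word_norm m.2 p) | m <- t].

Lemma act_word_normE u p : nceq (act_word u p) (act_word_norm u p).
Proof.
elim: u => //= k u IHu w; rewrite nccoef_normalize.
by apply: der_nceq => // -[] v; rewrite nccoef_normalize.
Qed.

Lemma act_normE t p : nceq (act t p) (act_norm t p).
Proof.
move=> w; rewrite !nccoef_sum !big_map; apply: eq_bigr => m _.
by rewrite !nccoef_scale act_word_normE.
Qed.

Definition eps_relation : lieterm :=
  LAdd (LBr (LGen (E2 10)) (LGen (E2 4)))
       (LScale (-3) (LBr (LGen (E2 8)) (LGen (E2 6)))).

Lemma lie_ker_eps_relation : lie_ker eps_relation.
Proof. by split=> w; rewrite act_normE; apply: nceq0_normalize; vm_compute. Qed.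

Lemma iota_image_relation (f : dual) : in_iota_image f ->
  f [:: E2 10; E2 4] - f [:: E2 4; E2 10]
    - 3 * f [:: E2 8; E2 6] + 3 * f [:: E2 6; E2 8] = 0.
Proof.
move=> /(_ _ (ker_gen (ncword [::]) (ncword [::]) lie_ker_eps_relation)).
rewrite /pairing /= !big_cons big_nil /=; lra.
Qed.

Lemma W_shuffle_decomposition (a b c d : rat) (w : seq nat) :
  a - b - 3 * c + 3 * d = 0 ->
  a * dw [:: E2 10; E2 4] w + b * dw [:: E2 4; E2 10] w
    + c * dw [:: E2 8; E2 6] w + d * dw [:: E2 6; E2 8] w
  = b * shuffle_dual [:: E2 10] [:: E2 4] w
    + d * shuffle_dual [:: E2 8] [:: E2 6] w
    + (c - d) * (3 * dw [:: E2 10; E2 4] w + dw [:: E2 8; E2 6] w).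
Proof.
move=> rel; rewrite /shuffle_dual /dw /= ![_ == w]eq_sym.
case: (eqVneq w [:: 5; 2]%N) => [->|_] /=; first lra.
case: (eqVneq w [:: 2; 5]%N) => [->|_] /=; first lra.
case: (eqVneq w [:: 4; 3]%N) => [->|_] /=; first lra.
case: (eqVneq w [:: 3; 4]%N) => _ /=; lra.
Qed.

Theorem mainTheorem9 (f : dual) :
  in_W f -> in_iota_image f ->
  exists p q r : rat, forall w,
    f w = p * shuffle_dual [:: E2 10] [:: E2 4] w
        + q * shuffle_dual [:: E2 8] [:: E2 6] w
        + r * (3 * dw [:: E2 10; E2 4] w + dw [:: E2 8; E2 6] w).
Proof.
move=> [a [b [c [d fW]]]] /iota_image_relation f_rel.
have rel : a - b - 3 * c + 3 * d = 0 by move: f_rel; rewrite !fW /dw /=; lra.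
exists b, d, (c - d) => w.
by rewrite fW; apply: W_shuffle_decomposition.
Qed.
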